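(* Let $\alpha$ be a countable ordinal and $S$ a sierpinskisation of $\alpha$ and $\omega$. Then $[\omega]^{<\omega}$ is not embeddable (as a poset) in $I_{<\omega}(S)$.
   Context: A sierpinskisation of a countable order type $\alpha$ and $\omega$ is a poset $(S,\le)$ whose order is the intersection of two linear orders on $S$, one of type $\alpha$ and one of type $\omega$. $I_{<\omega}(S)$ is the set of finitely generated initial segments of $S$ ordered by inclusion. $[\omega]^{<\omega}$ is the set of finite subsets of $\mathbb{N}$ ordered by inclusion. *)

From Stdlib Require List.
From mathcomp Require Import all_boot.
From mathcomp Require Import finmap.
Set Implicit Arguments.
Unset Strict Implicit.
Unset Printing Implicit Defensive.
Open Scope fset_scope.

Definition linear_order (T : Type) (r : T -> T -> Prop) : Prop :=
  (forall x, r x x) /\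
  (forall x y z, r x y -> r y z -> r x z) /\
  (forall x y, r x y -> r y x -> x = y) /\
  (forall x y, r x y \/ r y x).

Definition well_order (T : Type) (r : T -> T -> Prop) : Prop :=
  linear_order r /\ well_founded (fun x y => r x y /\ x <> y).

Definition omega_type (T : Type) (r : T -> T -> Prop) : Prop :=
  exists h : T -> nat, bijective h /\ forall x y, r x y <-> (h x <= h y)%N.

(* (T, le) is a sierpinskisation of a countable ordinal and omega:
   le is the intersection of a well-order r1 (of some ordinal type alpha,
   necessarily countable since T is countable) and an order r2 of type omega. *)
Definition sierpinskisation (T : Type) (le : T -> T -> Prop) : Prop :=
  exists r1 r2 : T -> T -> Prop,
    well_order r1 /\ omega_type r2 /\ forall x y, le x y <-> (r1 x y /\ r2 x y).

Definition fin_gen_initial_segment (T : Type) (le : T -> T -> Prop) (I : T -> Prop) : Prop :=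
  exists F : list T, forall x, I x <-> exists y, List.In y F /\ le x y.

Definition embeds_fin_subsets_in_Ifin (T : Type) (le : T -> T -> Prop) : Prop :=
  exists f : {fset nat} -> (T -> Prop),
    (forall A, fin_gen_initial_segment le (f A)) /\
    (forall A B, A `<=` B <-> (forall x, f A x -> f B x)).

(* A sierpinskisation of a well-order and omega is well-quasi-ordered: in any
   sequence, take the term x_n0 that is least in the well-order; either a later
   term is above it in the omega-order, or all later terms are below it there,
   and then two of them coincide by pigeonhole.  On the other hand, if
   [[omega]^{<omega}] embedded via f, then for each n the finitely generated
   segment f {n} is not contained in any f {n+1, ..., n+m}; as these increase
   with m, some generator x_n of f {n} avoids all of them.  A good pair
   x_i <= x_j with i < j puts x_i in f {j}, which is contained in
   f {i+1, ..., j}: a contradiction. *)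
From mathcomp Require Import all_boot.
From mathcomp Require Import finmap.
From mathcomp Require Import zify.
From Stdlib Require Import Classical ClassicalEpsilon.
Set Implicit Arguments.
Unset Strict Implicit.
Unset Printing Implicit Defensive.
Open Scope nat_scope.

Definition all_sequences_good (T : Type) (le : T -> T -> Prop) : Prop :=
  forall x : nat -> T, exists i j, i < j /\ le (x i) (x j).

Lemma pigeonhole_nat K (g : nat -> nat) :
  (forall j, g j < K) -> exists i j, i < j /\ g i = g j.
Proof.
move=> gK; pose g' (i : 'I_K.+1) : 'I_K := Ordinal (gK i).
have /injectivePn[i [j neq_ij /eqP eq_g']] : ~~ injectiveb g'.
  by apply/negP => /injectiveP /leq_card; rewrite !card_ord ltnn.
have eq_g : g i = g j := congr1 val (eqP eq_g').
case: (ltngtP i j) => [lt_ij|lt_ji|/val_inj eq_ij]; last by rewrite eq_ij eqxx in neq_ij.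
- by exists i, j.
- by exists j, i.
Qed.

Lemma well_order_seq_min (T : Type) (r : T -> T -> Prop) (x : nat -> T) :
  well_order r -> exists n0, forall n, r (x n0) (x n).
Proof.
move=> [[r_refl [_ [_ r_total]]] r_wf]; apply: NNPP => no_min.
suff /(_ (x 0) 0 erefl) [] : forall t n, x n <> t.
elim/(well_founded_ind r_wf) => t IHt n xn_t.
have [k not_xn_xk] : exists k, ~ r (x n) (x k).
  by apply: not_all_ex_not => xn_min; apply: no_min; exists n.
have xk_xn : r (x k) (x n) by case: (r_total (x n) (x k)).
apply: (IHt (x k) _ k erefl); rewrite -xn_t; split=> // xk_eq.
by apply: not_xn_xk; rewrite xk_eq; apply: r_refl.
Qed.

Section Sierpinskisation.

Variables (T : Type) (le : T -> T -> Prop).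
Hypothesis sle : sierpinskisation le.

Lemma sierpinskisation_refl x : le x x.
Proof.
have [r1 [r2 [[[r1_refl _] _] [[h [_ hr2]] le_def]]]] := sle.
by apply/le_def; split=> //; apply/hr2.
Qed.

Lemma sierpinskisation_trans x y z : le x y -> le y z -> le x z.
Proof.
have [r1 [r2 [[[_ [r1_trans _]] _] [[h [_ hr2]] le_def]]]] := sle.
move=> /le_def[r1xy /hr2 hxy] /le_def[r1yz /hr2 hyz].
by apply/le_def; split; [exact: r1_trans r1yz | apply/hr2; exact: leq_trans hyz].
Qed.

Lemma sierpinskisation_good : all_sequences_good le.
Proof.
have [r1 [r2 [r1_wo [[h [/bij_inj h_inj hr2]] le_def]]]] := sle.
move=> x; have [n0 n0_min] := well_order_seq_min x r1_wo.
have [[j [lt_n0j hle]] | no_later] :=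
  classic (exists j, n0 < j /\ h (x n0) <= h (x j)).
  by exists n0, j; split=> //; apply/le_def; split=> //; apply/hr2.
have below j : h (x (n0.+1 + j)) < h (x n0).
  rewrite ltnNge; apply/negP => hle; apply: no_later.
  by exists (n0.+1 + j); rewrite leq_addr.
have [a [b [lt_ab /h_inj eq_ab]]] := pigeonhole_nat below.
exists (n0.+1 + a), (n0.+1 + b); rewrite ltn_add2l eq_ab.
by split=> //; apply: sierpinskisation_refl.
Qed.

End Sierpinskisation.

Lemma fin_gen_initial_segment_down (T : Type) (le : T -> T -> Prop) I :
  (forall x y z, le x y -> le y z -> le x z) ->
  fin_gen_initial_segment le I -> forall a b, le a b -> I b -> I a.
Proof.
move=> le_trans [L IL] a b le_ab /IL[z [Lz le_bz]].
by apply/IL; exists z; split=> //; apply: le_trans le_bz.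
Qed.

Lemma list_monotone_bound (T : Type) (P : nat -> T -> Prop) (L : list T) :
  (forall m m' y, m <= m' -> P m y -> P m' y) ->
  (forall y, List.In y L -> exists m, P m y) ->
  exists M, forall y, List.In y L -> P M y.
Proof.
move=> P_mono; elim: L => [|a L IHL] PL; first by exists 0.
have [ma Pa] := PL a (or_introl erefl).
have [M PM] := IHL (fun y Ly => PL y (or_intror Ly)).
exists (maxn ma M) => y [<-|Ly]; first exact: P_mono (leq_maxl _ _) Pa.
exact: P_mono (leq_maxr _ _) (PM y Ly).
Qed.

Lemma fin_gen_escapes_chain (T : Type) (le : T -> T -> Prop) I (J : nat -> T -> Prop) :
  (forall x, le x x) ->
  fin_gen_initial_segment le I ->
  (forall m a b, le a b -> J m b -> J m a) ->
  (forall m m' y, m <= m' -> J m y -> J m' y) ->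
  (forall m, ~ (forall y, I y -> J m y)) ->
  exists y, I y /\ forall m, ~ J m y.
Proof.
move=> le_refl [L IL] J_down J_mono I_notin; apply: NNPP => no_escape.
have L_in_J y : List.In y L -> exists m, J m y.
  move=> Ly; apply: NNPP => notJ; apply: no_escape; exists y; split.
    by apply/IL; exists y.
  by move=> m Jmy; apply: notJ; exists m.
have [M LM] := list_monotone_bound J_mono L_in_J.
by apply: (I_notin M) => y /IL[z [Lz le_yz]]; apply: J_down le_yz (LM z Lz).
Qed.

Definition fset_after (n m : nat) : {fset nat} := seq_fset tt (iota n.+1 m).

Lemma in_fset_after n m k : (k \in fset_after n m) = (n < k <= n + m).
Proof. by rewrite seq_fsetE mem_iota addSn ltnS. Qed.

Theorem lemma2p2 (T : Type) (le : T -> T -> Prop) :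
  sierpinskisation le -> ~ embeds_fin_subsets_in_Ifin le.
Proof.
move=> sle [f [f_fg f_emb]].
have f_down A := fin_gen_initial_segment_down (sierpinskisation_trans sle) (f_fg A).
have escape n : exists y, f [fset n] y /\ forall m, ~ f (fset_after n m) y.
  apply: (fin_gen_escapes_chain (J := fun m => f (fset_after n m))
           (sierpinskisation_refl sle) (f_fg _)).
  - by move=> m; apply: f_down.
  - move=> m m' y le_mm'; apply: (proj1 (f_emb _ _)); apply/fsubsetP => k.
    by rewrite !in_fset_after; lia.
  - by move=> m /f_emb; rewrite fsub1set in_fset_after ltnn.
have [x x_esc] : exists x : nat -> T, forall n,
    f [fset n] (x n) /\ forall m, ~ f (fset_after n m) (x n).
  by exists (fun n => proj1_sig (constructive_indefinite_description _ (escape n)))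
    => n; case: constructive_indefinite_description.
have [i [j [lt_ij le_xij]]] := sierpinskisation_good sle x.
have xi_in_fj : f [fset j] (x i) := f_down _ _ _ le_xij (proj1 (x_esc j)).
apply: (proj2 (x_esc i) (j - i)); apply: (proj1 (f_emb _ _)) xi_in_fj.
by rewrite fsub1set in_fset_after; lia.
Qed.
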